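(* Let $a_1,\dots,a_d$ be positive integers with $\gcd(a_1,\dots,a_d)=1$, and let $N$ be a positive integer which is a $\mathbb Z_{\ge0}$-linear combination of $a_1,\dots,a_d$. Let $\mathcal M$ be a maximal element of $\mathfrak M$. Then for every $0\le i<N$ there is exactly one $m\in\mathcal M$ with $m\equiv i\pmod N$. In particular every maximal element of $\mathfrak M$ has exactly $N$ elements.
   Context: $\mathcal S_+=\{N+\sum_ic_ia_i: c_i\in\mathbb Z_{\ge0}\}$, $\mathcal S_-=-\mathcal S_+$, $\mathcal S=\mathcal S_+\cup\mathcal S_-$, and $\mathfrak M=\{\mathcal M\subset\mathbb Z:\ m,m'\in\mathcal M\Rightarrow m-m'\notin\mathcal S\}$, partially ordered by inclusion. *)

From HB Require Import structures.
From mathcomp Require Import all_boot all_order all_algebra.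
Set Implicit Arguments. Unset Strict Implicit. Unset Printing Implicit Defensive.
Import Order.TTheory GRing.Theory Num.Theory.
Local Open Scope ring_scope.

Definition Splus (d : nat) (a : 'I_d -> nat) (N : nat) (x : int) : Prop :=
  exists c : 'I_d -> nat, x = ((N + \sum_(i < d) c i * a i)%N)%:Z.

Definition Sset (d : nat) (a : 'I_d -> nat) (N : nat) (x : int) : Prop :=
  Splus a N x \/ Splus a N (- x).

Definition admissible (d : nat) (a : 'I_d -> nat) (N : nat) (M : int -> Prop) : Prop :=
  forall m m', M m -> M m' -> ~ Sset a N (m - m').

Definition maximal_adm (d : nat) (a : 'I_d -> nat) (N : nat) (M : int -> Prop) : Prop :=
  admissible a N M /\
  forall M' : int -> Prop, admissible a N M' -> (forall x, M x -> M' x) ->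
    forall x, M' x -> M x.

(* Two elements of an admissible set that are congruent modulo N differ by a nonzero multiple
   of N, which lies in S because N is in the semigroup generated by the a_i; so each residue
   class meets M at most once, and M is finite.  Given a residue class, walk down it in steps
   of N from above M, and stop at the last y for which no m in M has m - y in S_+ (or at a y
   far below M if there is none).  Then y - m in S_+ is impossible as well: with the m' in M
   for which m' - (y - N) is in S_+ it would give m' - m in S_+ + (S_+ - N) = S_+.  So y can
   be added to M, and a maximal M already contains it. *)
From HB Require Import structures.
From mathcomp Require Import all_boot all_order all_algebra.
From mathcomp Require Import zify ring.
From Stdlib Require Import Classical.
Set Implicit Arguments. Unset Strict Implicit. Unset Printing Implicit Defensive.
Import Order.TTheory GRing.Theory Num.Theory.
Local Open Scope ring_scope.

Definition nat_span (d : nat) (a : 'I_d -> nat) (t : int) : Prop :=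
  exists c : 'I_d -> nat, t = (\sum_(i < d) c i * a i)%N%:Z.

Lemma nat_span0 (d : nat) (a : 'I_d -> nat) : nat_span a 0.
Proof. by exists (fun _ => 0%N); rewrite big1. Qed.

Lemma nat_spanD (d : nat) (a : 'I_d -> nat) (t u : int) :
  nat_span a t -> nat_span a u -> nat_span a (t + u).
Proof.
move=> [c ->] [c' ->]; exists (fun i => c i + c' i)%N.
rewrite -PoszD -big_split /=; congr Posz.
by apply: eq_bigr => i _; rewrite mulnDl.
Qed.

Lemma nat_span_mul_nat (d : nat) (a : 'I_d -> nat) (t : int) (k : nat) :
  nat_span a t -> nat_span a (t * k%:Z).
Proof.
move=> span_t; elim: k => [|k IHk]; first by rewrite mulr0; exact: nat_span0.
by rewrite intS mulrDr mulr1 addrC; exact: nat_spanD.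
Qed.

Lemma nat_change_point (P : nat -> Prop) (k : nat) :
  ~ P 0%N -> P k -> exists j, ~ P j /\ P j.+1.
Proof.
move=> nP0; elim: k => [|k IHk] Pk; first by [].
by case: (classic (P k)) => [/IHk|nPk]; last exists k.
Qed.

Section SumsOfGenerators.

Variables (d : nat) (a : 'I_d -> nat) (N : nat).

Lemma SplusP (x : int) : Splus a N x <-> exists2 t, nat_span a t & x = N%:Z + t.
Proof.
split=> [[c ->]|[t [c ->] ->]]; last by exists c; rewrite PoszD.
by exists (\sum_(i < d) c i * a i)%N%:Z; [exists c | rewrite PoszD].
Qed.

Lemma Splus_ge (x : int) : Splus a N x -> N%:Z <= x.
Proof. by move=> [c ->]; rewrite lez_nat leq_addr. Qed.

Lemma Splus_addr_span (x t : int) : Splus a N x -> nat_span a t -> Splus a N (x + t).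
Proof.
move=> /SplusP[u span_u ->] span_t; apply/SplusP.
by exists (u + t); [exact: nat_spanD | rewrite addrA].
Qed.

Hypothesis span_N : nat_span a N%:Z.

Lemma Sset_mulN (q : int) : q != 0 -> Sset a N (q * N%:Z).
Proof.
have Splus_succ k : Splus a N (k.+1%:Z * N%:Z).
  apply/SplusP; exists (N%:Z * k%:Z); first exact: nat_span_mul_nat.
  by rewrite intS mulrDl mul1r mulrC.
case: q => [[|k]|k] // _; first by left.
by right; rewrite NegzE mulNr opprK.
Qed.

Hypothesis N_gt0 : (0 < N)%N.

Section Admissible.

Variable M : int -> Prop.
Hypothesis M_adm : admissible a N M.

Lemma adm_eq_mod (m m' : int) : M m -> M m' -> (m = m' %[mod N%:Z])%Z -> m = m'.
Proof.
move=> Mm Mm' eq_mod; have NZ : N%:Z != 0 by rewrite eqz_nat -lt0n.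
have eq_diff : m - m' = ((m %/ N%:Z)%Z - (m' %/ N%:Z)%Z) * N%:Z.
  by rewrite {1}(divz_eq m N%:Z) {1}(divz_eq m' N%:Z) eq_mod; ring.
have [q0|/Sset_mulN] := eqVneq ((m %/ N%:Z)%Z - (m' %/ N%:Z)%Z) 0.
  by apply/eqP; rewrite -subr_eq0 eq_diff q0 mul0r.
by rewrite -eq_diff => /(M_adm Mm Mm').
Qed.

Lemma adm_bounded : exists K : nat, forall m, M m -> - K%:Z <= m <= K%:Z.
Proof.
have NZ : N%:Z != 0 by rewrite eqz_nat -lt0n.
suff bounded_on_residues n : exists K : nat, forall m, M m -> (m %% N%:Z)%Z < n%:Z ->
    - K%:Z <= m <= K%:Z.
  have [K MK] := bounded_on_residues N; exists K => m Mm.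
  by apply: MK => //; apply: ltz_pmod; lia.
elim: n => [|n [K MK]]; first by exists 0%N => m _; have := modz_ge0 m NZ; lia.
case: (classic (exists2 m0, M m0 & (m0 %% N%:Z)%Z = n%:Z)) => [[m0 Mm0 m0n]|no_m0].
  exists (K + absz m0)%N => m Mm m_lt.
  have [m_lt'|mn] : (m %% N%:Z)%Z < n%:Z \/ (m %% N%:Z)%Z = n%:Z by lia.
    by have := MK m Mm m_lt'; lia.
  by rewrite (adm_eq_mod Mm Mm0 (etrans mn (esym m0n))); lia.
exists K => m Mm m_lt.
have [|mn] : (m %% N%:Z)%Z < n%:Z \/ (m %% N%:Z)%Z = n%:Z by lia.
  exact: MK.
by case: no_m0; exists m.
Qed.

Definition compatible (y : int) : Prop :=
  forall m, M m -> ~ Splus a N (y - m) /\ ~ Splus a N (m - y).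

Lemma adm_add_compatible (y : int) :
  compatible y -> admissible a N (fun z => M z \/ z = y).
Proof.
move=> y_comp m m' [Mm|->] [Mm'|->]; first exact: M_adm.
- by have [? ?] := y_comp m Mm; case; rewrite ?opprB.
- by have [? ?] := y_comp m' Mm'; case; rewrite ?opprB.
- by rewrite subrr => -[|]; move/Splus_ge; rewrite ?oppr0; lia.
Qed.

Lemma exists_compatible (i : int) : exists y, (y = i %[mod N%:Z])%Z /\ compatible y.
Proof.
have NZ : N%:Z != 0 by rewrite eqz_nat -lt0n.
have [K MK] := adm_bounded.
pose r := (i %% N%:Z)%Z.
have r_ge0 : 0 <= r by exact: modz_ge0.
have r_lt : r < N%:Z by apply: ltz_pmod; lia.
pose x (k : nat) := r + (K%:Z - k%:Z) * N%:Z.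
have x_mod k : (x k = i %[mod N%:Z])%Z by rewrite /x addrC modzMDl modz_mod.
pose above k := exists2 m, M m & Splus a N (m - x k).
have not_above0 : ~ above 0%N.
  by move=> [m /MK m_bnd /Splus_ge]; rewrite /x; nia.
case: (classic (exists k, above k)) => [[k /(nat_change_point not_above0)]|never_above].
  move=> [j [not_above_j [mj Mmj above_mj]]]; exists (x j); split=> // m Mm.
  split; last by move=> ?; apply: not_above_j; exists m.
  move=> /SplusP[t span_t x_m]; apply: (M_adm Mmj Mm); left.
  have x_succ : x j.+1 = x j - N%:Z by rewrite /x intS; ring.
  have -> : mj - m = mj - x j.+1 + t by move: x_m; rewrite x_succ; lia.
  exact: Splus_addr_span.
exists (x (K + K).+1); split=> // m Mm.
split; last by move=> ?; apply: never_above; exists (K + K).+1%N, m.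
by move=> /Splus_ge; have := MK m Mm; rewrite /x; nia.
Qed.

End Admissible.

Lemma maximal_adm_residue (M : int -> Prop) : maximal_adm a N M ->
  forall i, exists! m, M m /\ (m = i %[mod N%:Z])%Z.
Proof.
move=> [M_adm M_max] i; have [y [y_mod y_comp]] := exists_compatible M_adm i.
have My : M y.
  by apply: (M_max _ (adm_add_compatible M_adm y_comp)); [left | right].
exists y; split=> // m [Mm m_mod]; apply: (adm_eq_mod M_adm My Mm).
by rewrite y_mod m_mod.
Qed.

End SumsOfGenerators.

Lemma residue_transversal_seq (P : int -> Prop) (N : nat) : (0 < N)%N ->
  (forall i : int, 0 <= i < N%:Z -> exists! m, P m /\ (m = i %[mod N%:Z])%Z) ->
  exists s : seq int, uniq s /\ size s = N /\ forall m, P m <-> m \in s.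
Proof.
move=> N_gt0 P_residue; have NZ : N%:Z != 0 by rewrite eqz_nat -lt0n.
suff prefix n : (n <= N)%N -> exists s : seq int, [/\ uniq s, size s = n &
    forall m, (P m /\ (m %% N%:Z)%Z < n%:Z) <-> m \in s].
  have [s [uniq_s size_s Ps]] := prefix N (leqnn N).
  exists s; do 2!split=> //; move=> m; rewrite -Ps.
  by split=> [Pm|[]//]; split=> //; apply: ltz_pmod; lia.
elim: n => [|n IHn] n_lt.
  by exists [::]; split=> // m; split=> // -[_]; have := modz_ge0 m NZ; lia.
have [s [uniq_s size_s Ps]] := IHn (ltnW n_lt).
have [mn [[Pmn mn_mod] mn_unique]] := P_residue n%:Z ltac:(lia).
have mn_n : (mn %% N%:Z)%Z = n%:Z by rewrite mn_mod modz_small //; lia.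
exists (mn :: s); split=> /=; first by rewrite uniq_s andbT; apply/negP => /Ps[_]; lia.
- by rewrite size_s.
move=> m; rewrite in_cons; split=> [[Pm m_lt]|/orP[/eqP ->|/Ps[Pm m_lt]]].
2,3: by split=> //; lia.
have [m_lt'|m_n] : (m %% N%:Z)%Z < n%:Z \/ (m %% N%:Z)%Z = n%:Z by lia.
  by apply/orP; right; apply/Ps.
apply/orP; left; apply/eqP; symmetry; apply: mn_unique.
by split=> //; rewrite m_n modz_small //; lia.
Qed.

Theorem mainTheorem16 (d : nat) (a : 'I_d -> nat) (N : nat) (M : int -> Prop)
  (ha_pos : forall i, (0 < a i)%N)
  (ha_gcd : \big[gcdn/0%N]_(i < d) a i = 1%N)
  (hN_pos : (0 < N)%N)
  (hN_comb : exists c : 'I_d -> nat, N = (\sum_(i < d) c i * a i)%N)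
  (hM : maximal_adm a N M) :
  (forall i : int, 0 <= i < N%:Z ->
     exists! m : int, M m /\ (m = i %[mod N%:Z])%Z) /\
  (exists s : seq int, uniq s /\ size s = N /\ forall m, M m <-> m \in s).
Proof.
have span_N : nat_span a N%:Z by case: hN_comb => c ->; exists c.
have M_residue := maximal_adm_residue span_N hN_pos hM.
split=> [i _|]; first exact: M_residue.
by apply: residue_transversal_seq => // i _; exact: M_residue.
Qed.
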